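(* Let $K\ge 2$ be an integer, $\mathcal{K}=\{1,\dots,K\}$ the set of players (user equipments), and $\mathcal{L}$ a finite set (access points). For each $k\in\mathcal{K}$ let $\mathcal{M}_k\subseteq\mathcal{L}$ be a nonempty set and let $\beta_{k,l}>0$ for $k\in\mathcal{K}$, $l\in\mathcal{L}$. Fix $\alpha\in\mathbb{R}$ and $0<\rho_{\min}\le\rho_{\max}$, and let each player $k$ have strategy set $\mathcal{P}_k=[\rho_{\min},\rho_{\max}]$; write $\boldsymbol{\rho}=(\rho_1,\dots,\rho_K)\in\Upsilon=\mathcal{P}_1\times\cdots\times\mathcal{P}_K$ and $\boldsymbol{\rho}_{(-k)}$ for the strategies of all players other than $k$. Define $c_k=\big(\sum_{l\in\mathcal{M}_k}\beta_{k,l}\big)^{\alpha}$ and the payoff of player $k$ by $$\mu_k(\alpha,\rho_k,\boldsymbol{\rho}_{(-k)})=\frac{\sum_{i\neq k}\rho_i c_i}{\rho_k c_k}+\rho_k c_k\sum_{i\neq k}\frac{1}{\rho_i c_i}.$$ Then the function $$u(\alpha,\boldsymbol{\rho})=\frac12\sum_{k\in\mathcal{K}}\mu_k(\alpha,\boldsymbol{\rho})$$ is an exact potential function for the game $\mathcal{G}(\alpha)=\{\mathcal{K},\{\mathcal{P}_k\}_k,\{\mu_k\}_k\}$, i.e., for every $k\in\mathcal{K}$, every $\boldsymbol{\rho}_{(-k)}$, and every $\rho_k,\rho_k'\in\mathcal{P}_k$, $$u(\alpha,\rho_k',\boldsymbol{\rho}_{(-k)})-u(\alpha,\rho_k,\boldsymbol{\rho}_{(-k)})=\mu_k(\alpha,\rho_k',\boldsymbol{\rho}_{(-k)})-\mu_k(\alpha,\rho_k,\boldsymbol{\rho}_{(-k)}).$$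 In particular $\mathcal{G}(\alpha)$ is an exact potential game.
   Context: A strategic game with player set $\mathcal{K}$, strategy sets $\mathcal{P}_k$ and payoffs $\mu_k:\Upsilon\to\mathbb{R}$ is an exact potential game if there is a function $u:\Upsilon\to\mathbb{R}$ (an exact potential function) such that any unilateral change of strategy by any player $k$ changes $u$ by exactly the same amount as it changes $\mu_k$. Here $\rho_k$ is the uplink data transmit power of user $k$, $\beta_{k,l}$ is the large-scale fading coefficient between user $k$ and access point $l$, and $\mathcal{M}_k$ is the set of access points serving user $k$. *)

From mathcomp Require Import all_boot all_order all_algebra.
From mathcomp Require Import all_classical all_reals all_analysis.
Set Implicit Arguments. Unset Strict Implicit. Unset Printing Implicit Defensive.
Import Order.TTheory GRing.Theory Num.Theory.
Local Open Scope ring_scope.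

Definition cfac (R : realType) (K : nat) (L : finType)
  (M : 'I_K -> {set L}) (beta : 'I_K -> L -> R) (alpha : R) (k : 'I_K) : R :=
  powR (\sum_(l in M k) beta k l) alpha.

Definition payoff (R : realType) (K : nat) (L : finType)
  (M : 'I_K -> {set L}) (beta : 'I_K -> L -> R) (alpha : R)
  (rho : 'I_K -> R) (k : 'I_K) : R :=
  let c := cfac M beta alpha in
  (\sum_(i < K | i != k) rho i * c i) / (rho k * c k)
  + rho k * c k * \sum_(i < K | i != k) (rho i * c i)^-1.

Definition potential (R : realType) (K : nat) (L : finType)
  (M : 'I_K -> {set L}) (beta : 'I_K -> L -> R) (alpha : R)
  (rho : 'I_K -> R) : R :=
  2^-1 * \sum_(k < K) payoff M beta alpha rho k.

Definition upd (R : Type) (K : nat) (rho : 'I_K -> R) (k : 'I_K) (x : R)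
  : 'I_K -> R := fun i => if i == k then x else rho i.

From mathcomp Require Import all_boot all_order all_algebra.
From mathcomp Require Import all_classical all_reals all_analysis.
From mathcomp Require Import ring.
Import Order.TTheory GRing.Theory Num.Theory.
Local Open Scope ring_scope.

(* In terms of the effective powers a_i = rho_i c_i, with S = sum_i a_i and
   T = sum_i 1/a_i, the payoff is mu_k = S/a_k + a_k T - 2, so u = S T - K.
   Writing S = a_k + S' and T = 1/a_k + T', where S', T' do not involve a_k,
   one gets u - mu_k = 1 + S' T' - K: the gap between the potential and
   player k's payoff does not depend on player k's strategy. *)

Section RatioPayoff.
Context {R : numFieldType} {K : nat}.
Implicit Types (a b : 'I_K -> R) (k : 'I_K).

Definition ratio_payoff a k : R :=
  (\sum_(i < K | i != k) a i) / a k + a k * \sum_(i < K | i != k) (a i)^-1.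

Definition ratio_potential a : R := 2^-1 * \sum_(k < K) ratio_payoff a k.

Lemma ratio_payoffE a k : (forall i, a i != 0) ->
  ratio_payoff a k = (\sum_i a i) / a k + a k * (\sum_i (a i)^-1) - 2.
Proof.
move=> a_neq0; rewrite /ratio_payoff [\sum_i a i](bigD1 k) //= [\sum_i (a i)^-1](bigD1 k) //=.
by field; apply: a_neq0.
Qed.

Lemma ratio_potentialE a : (forall i, a i != 0) ->
  ratio_potential a = (\sum_i a i) * (\sum_i (a i)^-1) - K%:R.
Proof.
move=> a_neq0; rewrite /ratio_potential (eq_bigr _ (fun k _ => ratio_payoffE a k a_neq0)).
rewrite sumrB big_split /= -mulr_sumr -mulr_suml sumr_const card_ord -mulr_natr.
by field.
Qed.

Lemma ratio_potential_subE a k : (forall i, a i != 0) ->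
  ratio_potential a - ratio_payoff a k =
  (\sum_(i < K | i != k) a i) * (\sum_(i < K | i != k) (a i)^-1) + 1 - K%:R.
Proof.
move=> a_neq0; rewrite ratio_potentialE // ratio_payoffE //.
rewrite [\sum_i a i](bigD1 k) //= [\sum_i (a i)^-1](bigD1 k) //=.
by field; apply: a_neq0.
Qed.

Lemma ratio_potential_exact a b k :
  (forall i, a i != 0) -> (forall i, b i != 0) ->
  (forall i, i != k -> a i = b i) ->
  ratio_potential b - ratio_potential a = ratio_payoff b k - ratio_payoff a k.
Proof.
move=> a_neq0 b_neq0 eq_ab.
have gap_ab : ratio_potential a - ratio_payoff a k
              = ratio_potential b - ratio_payoff b k.
  by rewrite !ratio_potential_subE //; congr (_ * _ + _ - _);
    apply: eq_bigr => i /eq_ab ->.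
by rewrite -[ratio_potential a](subrK (ratio_payoff a k)) gap_ab; ring.
Qed.

End RatioPayoff.

Lemma cfac_gt0 (R : realType) (K : nat) (L : finType)
  (M : 'I_K -> {set L}) (beta : 'I_K -> L -> R) (alpha : R) (k : 'I_K) :
  M k != finset.set0 -> (forall l, 0 < beta k l) -> 0 < cfac M beta alpha k.
Proof.
move=> /set0Pn[l l_Mk] beta_gt0; apply: powR_gt0.
rewrite (bigD1 l) //= ltr_wpDr //.
by apply: sumr_ge0 => j _; apply/ltW.
Qed.

Lemma payoffE (R : realType) (K : nat) (L : finType)
  (M : 'I_K -> {set L}) (beta : 'I_K -> L -> R) (alpha : R) rho :
  payoff M beta alpha rho = ratio_payoff (fun i => rho i * cfac M beta alpha i).
Proof. by []. Qed.

Lemma potentialE (R : realType) (K : nat) (L : finType)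
  (M : 'I_K -> {set L}) (beta : 'I_K -> L -> R) (alpha : R) rho :
  potential M beta alpha rho
  = ratio_potential (fun i => rho i * cfac M beta alpha i).
Proof. by []. Qed.

Theorem corollary1 (R : realType) (K : nat) (L : finType)
  (M : 'I_K -> {set L}) (beta : 'I_K -> L -> R) (alpha rmin rmax : R) :
  (2 <= K)%N ->
  (forall k, M k != finset.set0) ->
  (forall k l, 0 < beta k l) ->
  0 < rmin -> rmin <= rmax ->
  forall (rho : 'I_K -> R),
  (forall i, rmin <= rho i <= rmax) ->
  forall (k : 'I_K) (x x' : R),
  rmin <= x <= rmax -> rmin <= x' <= rmax ->
  potential M beta alpha (upd rho k x') - potential M beta alpha (upd rho k x)
  = payoff M beta alpha (upd rho k x') k - payoff M beta alpha (upd rho k x) k.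
Proof.
move=> _ M_neq0 beta_gt0 rmin_gt0 _ rho rho_range k x x' /andP[x_ge _] /andP[x'_ge _].
have effective_neq0 y : rmin <= y ->
    forall i, upd rho k y i * cfac M beta alpha i != 0.
  move=> y_ge i; rewrite mulf_neq0 ?gt_eqF ?cfac_gt0 //.
  apply: lt_le_trans rmin_gt0 _; rewrite /upd; case: eqP => // _.
  by case/andP: (rho_range i).
rewrite !potentialE !payoffE.
apply: ratio_potential_exact (effective_neq0 x x_ge) (effective_neq0 x' x'_ge) _.
by move=> i /negbTE i_neq_k; rewrite /upd i_neq_k.
Qed.
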